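(* Let $\mathbb{P} = \mathbb{P}(c_1,c_2,c_3,c_4)$ be a weighted projective space with homogeneous coordinates $s_1,s_2,s_3,s_4$, and suppose $c_1 \ge c_2$ and $c_1 > c_i$ for $i=3,4$. Let $g_1,g_2 \in \mathbb{C}[s_3,s_4]$ be homogeneous of degree $c_1+c_2$, and suppose there is an automorphism $\sigma$ of $\mathbb{P}$ inducing an isomorphism \[ \sigma|_{H_1}\colon H_1 := (s_1 s_2 + g_1(s_3,s_4) = 0) \xrightarrow{\ \cong\ } H_2 := (s_1 s_2 + g_2(s_3,s_4) = 0) \] between these weighted hypersurfaces in $\mathbb{P}$. Then there is an automorphism $\tau$ of $\mathbb{P}(c_3,c_4)$ (with coordinates $s_3,s_4$) such that $g_1 = \tau^* g_2$. *)

From HB Require Import structures.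
From mathcomp Require Import all_boot all_algebra.
From mathcomp Require Import reals complex mpoly.
Set Implicit Arguments. Unset Strict Implicit. Unset Printing Implicit Defensive.
Import GRing.Theory.
Local Open Scope ring_scope.

Definition mweight (n : nat) (w : 'I_n -> nat) (m : 'X_{1..n}) : nat :=
  (\sum_(i < n) w i * m i)%N.

Definition whomog (R : ringType) (n : nat) (w : 'I_n -> nat) (d : nat)
  (p : {mpoly R[n]}) : Prop :=
  forall m, m \in msupp p -> mweight w m = d.

(* A graded C-algebra automorphism of the weighted polynomial ring
   R[x_0..x_{n-1}] (deg x_i = w i), given by the images phi_i of the
   coordinates (the pullback sigma^* x_i = phi_i); such automorphisms are the
   automorphisms of the weighted projective space P(w). *)
Definition graded_aut (R : ringType) (n : nat) (w : 'I_n -> nat)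
  (phi : n.-tuple {mpoly R[n]}) : Prop :=
  (forall i, whomog w (w i) (tnth phi i)) /\
  exists psi : n.-tuple {mpoly R[n]},
    (forall i, (tnth psi i) \mPo phi = 'X_i) /\
    (forall i, (tnth phi i) \mPo psi = 'X_i).

Definition w4 (c1 c2 c3 c4 : nat) : 'I_4 -> nat := tnth [tuple c1; c2; c3; c4].
Definition w2 (c3 c4 : nat) : 'I_2 -> nat := tnth [tuple c3; c4].

Definition emb34 (R : ringType) (g : {mpoly R[2]}) : {mpoly R[4]} :=
  g \mPo [tuple 'X_(inord 2 : 'I_4); 'X_(inord 3 : 'I_4)].

Definition hypF (R : ringType) (g : {mpoly R[2]}) : {mpoly R[4]} :=
  'X_(inord 0 : 'I_4) * 'X_(inord 1 : 'I_4) + emb34 g.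

From Pilot Require Import Defs.
From HB Require Import structures.
From mathcomp Require Import all_boot all_algebra.
From mathcomp Require Import reals complex mpoly.
From mathcomp Require Import ring zify.
Import GRing.Theory.
Local Open Scope ring_scope.

(* The pullbacks of s3 and s4 under a graded automorphism sigma have weight
   less than c1, so they do not involve s1; those of s1 and s2 have the form
   a1 s1 + q1 and a2 s1 + q2 with q1, q2 free of s1, because c2 <= c1 and all
   weights are positive.  Comparing the terms involving s1 in
   sigma^*(s1 s2 + g2) = lam (s1 s2 + g1) gives a1 a2 = 0 and
   a1 q2 + a2 q1 = lam s2: one of sigma^* s1, sigma^* s2 is a multiple of s2,
   the other is a s1 + q with a != 0, which vanishes at s1 = -q/a.  Hence
   sigma restricts to an automorphism tau of the line s1 = s2 = 0, which is
   P(c3, c4), with inverse the restriction of sigma^-1 and tau^* g2 = lam g1.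
   Composing with s_i |-> t^(c_i) s_i, where t^(c1 + c2) = lam^-1, removes lam. *)

Set Implicit Arguments.
Unset Strict Implicit.

Lemma tnth_inord (T : Type) (x : T) (n : nat) (t : n.+1.-tuple T) (k : nat) :
  (k <= n)%N -> tnth t (inord k) = nth x t k.
Proof. by move=> hk; rewrite (tnth_nth x) inordK. Qed.

Lemma ord2_inord (P : 'I_2 -> Prop) : P (inord 0) -> P (inord 1) -> forall i, P i.
Proof. by move=> P0 P1 i; rewrite -(inord_val i); case: i => -[|[|]]. Qed.

Lemma ord4_inord (P : 'I_4 -> Prop) :
  P (inord 0) -> P (inord 1) -> P (inord 2) -> P (inord 3) -> forall i, P i.
Proof. by move=> P0 P1 P2 P3 i; rewrite -(inord_val i); case: i => -[|[|[|[|]]]]. Qed.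

Section Composition.
Variable R : comNzRingType.

Lemma comp_mpolyX_tnth (n k : nat) (i : 'I_n) (t : n.-tuple {mpoly R[k]}) :
  'X_i \mPo t = tnth t i.
Proof. by rewrite comp_mpolyXU -tnth_nth. Qed.

Lemma comp_mpolyA (n k l : nat) (p : {mpoly R[n]}) (t : n.-tuple {mpoly R[k]})
    (u : k.-tuple {mpoly R[l]}) :
  (p \mPo t) \mPo u = p \mPo [tuple tnth t i \mPo u | i < n].
Proof.
rewrite [p \mPo t]comp_mpolyE [RHS]comp_mpolyE raddf_sum /=.
apply: eq_bigr => m _; rewrite comp_mpolyZ rmorph_prod /=; congr (_ *: _).
by apply: eq_bigr => i _; rewrite rmorphXn tnth_mktuple.
Qed.

End Composition.

Section FreeOf.
Variables (R : comNzRingType) (n : nat).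
Implicit Types (p q : {mpoly R[n]}) (j : 'I_n).

Definition zero_at j : n.-tuple {mpoly R[n]} :=
  [tuple if i == j then 0 else 'X_i | i < n].

Definition free_of j p : Prop := p \mPo zero_at j = p.

Lemma zero_atX j : 'X_j \mPo zero_at j = 0.
Proof. by rewrite comp_mpolyX_tnth tnth_mktuple eqxx. Qed.

Lemma free_ofX i j : i != j -> free_of j 'X_i.
Proof. by move=> /negbTE ij; rewrite /free_of comp_mpolyX_tnth tnth_mktuple ij. Qed.

Lemma free_ofZ j c p : free_of j p -> free_of j (c *: p).
Proof. by rewrite /free_of comp_mpolyZ => ->. Qed.

Lemma free_of_compE j p (l : nat) (t t' : n.-tuple {mpoly R[l]}) :
  free_of j p -> (forall i, i != j -> tnth t i = tnth t' i) -> p \mPo t = p \mPo t'.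
Proof.
move=> <- tt'; rewrite !comp_mpolyA; congr (p \mPo _).
apply: eq_from_tnth => i; rewrite !tnth_mktuple.
by case: eqVneq => [_|/tt']; rewrite ?comp_mpoly0 // !comp_mpolyX_tnth.
Qed.

Lemma free_of_zero_at j p : free_of j (p \mPo zero_at j).
Proof.
rewrite /free_of comp_mpolyA; congr (p \mPo _).
apply: eq_from_tnth => i; rewrite !tnth_mktuple.
by case: eqVneq => [_|/free_ofX]; rewrite ?comp_mpoly0.
Qed.

Lemma free_of_comp j (k : nat) (g : {mpoly R[k]}) (t : k.-tuple {mpoly R[n]}) :
  (forall i, free_of j (tnth t i)) -> free_of j (g \mPo t).
Proof.
move=> ht; rewrite /free_of comp_mpolyA; congr (g \mPo _).
by apply: eq_from_tnth => i; rewrite tnth_mktuple ht.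
Qed.

Lemma comp_zero_atX j m :
  'X_[m] \mPo zero_at j = if m j == 0%N then 'X_[m] else 0.
Proof.
rewrite comp_mpolyX mpolyXE_id; case: eqVneq => [mj0|mj].
  by apply: eq_bigr => i _; rewrite tnth_mktuple; case: eqP => // ->; rewrite mj0 !expr0.
by rewrite (bigD1 j) //= tnth_mktuple eqxx expr0n (negbTE mj) mul0r.
Qed.

Lemma msupp_free_of j p :
  (forall m, m \in msupp p -> m j = 0%N) -> free_of j p.
Proof.
move=> hp; rewrite /free_of comp_mpolyEX [RHS]mpolyE.
by apply: eq_big_seq => m /hp mj0; rewrite comp_zero_atX mj0 eqxx.
Qed.

Lemma mpoly_split_var j p :
  (forall m, m \in msupp p -> m j != 0%N -> m = U_(j)%MM) ->
  p = p@_U_(j) *: 'X_j + (p \mPo zero_at j).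
Proof.
move=> hU; set c := p@_U_(j).
have q_free : free_of j (p - c *: 'X_j).
  apply: msupp_free_of => m; rewrite mcoeff_msupp mcoeffB mcoeffZ mcoeffX.
  have [<-|ne] := eqVneq U_(j)%MM m; first by rewrite mulr1 subrr eqxx.
  rewrite mulr0 subr0 -mcoeff_msupp => /hU mU; apply/eqP.
  by apply: contraNT ne => /mU ->.
have -> : p \mPo zero_at j = p - c *: 'X_j.
  by rewrite -q_free comp_mpolyB comp_mpolyZ zero_atX scaler0 subr0.
by rewrite addrC subrK.
Qed.
End FreeOf.

Arguments zero_at {R n} j.

Section WeightedHomogeneous.
Variables (R : comNzRingType) (n : nat) (w : 'I_n -> nat).
Implicit Types (p q : {mpoly R[n]}) (d : nat).

Lemma mweightD (m1 m2 : 'X_{1..n}) :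
  Defs.mweight w (m1 + m2)%MM = (Defs.mweight w m1 + Defs.mweight w m2)%N.
Proof. by rewrite /Defs.mweight -big_split; apply: eq_bigr => i _; rewrite mnmDE mulnDr. Qed.

Lemma mweightU (j : 'I_n) : Defs.mweight w U_(j)%MM = w j.
Proof.
rewrite /Defs.mweight (bigD1 j) //= mnm1E eqxx muln1 big1 ?addn0 // => i /negbTE ij.
by rewrite mnm1E eq_sym ij muln0.
Qed.

Lemma whomog0 d : whomog w d (0 : {mpoly R[n]}).
Proof. by move=> m; rewrite msupp0. Qed.

Lemma whomog1 : whomog w 0 (1 : {mpoly R[n]}).
Proof.
move=> m; rewrite -mpolyC1 msuppC oner_eq0 inE => /eqP ->.
by rewrite /Defs.mweight big1 // => i _; rewrite mnm0E muln0.
Qed.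

Lemma whomogXU (j : 'I_n) : whomog w (w j) ('X_j : {mpoly R[n]}).
Proof. by move=> m; rewrite msuppX inE => /eqP ->; rewrite mweightU. Qed.

Lemma whomogD d p q : whomog w d p -> whomog w d q -> whomog w d (p + q).
Proof. by move=> hp hq m /msuppD_le; rewrite mem_cat => /orP[/hp|/hq]. Qed.

Lemma whomogZ d c p : whomog w d p -> whomog w d (c *: p).
Proof. by move=> hp m /msuppZ_le /hp. Qed.

Lemma whomogM d1 d2 p q :
  whomog w d1 p -> whomog w d2 q -> whomog w (d1 + d2) (p * q).
Proof.
move=> hp hq m /msuppM_le /allpairsP [[m1 m2] /= [/hp <- /hq <- ->]].
exact: mweightD.
Qed.

Lemma whomogX d k p : whomog w d p -> whomog w (d * k) (p ^+ k).
Proof.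
move=> hp; elim: k => [|k ih]; first by rewrite muln0 expr0; exact: whomog1.
by rewrite exprS mulnS; apply: whomogM.
Qed.

Lemma whomog_prod (I : finType) (F : I -> {mpoly R[n]}) (D : I -> nat) :
  (forall i, whomog w (D i) (F i)) -> whomog w (\sum_i D i)%N (\prod_i F i).
Proof. by move=> hF; elim/big_rec2: _ => [|i d p _]; [exact: whomog1|exact: whomogM]. Qed.

Lemma whomog_sum d (I : eqType) (s : seq I) (F : I -> {mpoly R[n]}) :
  (forall i, i \in s -> whomog w d (F i)) -> whomog w d (\sum_(i <- s) F i).
Proof.
move=> hF; rewrite big_seq; elim/big_rec: _ => [|i p /hF]; first exact: whomog0.
exact: whomogD.
Qed.

Lemma whomog_comp (k : nat) (w' : 'I_k -> nat) d (p : {mpoly R[k]})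
    (t : k.-tuple {mpoly R[n]}) :
  whomog w' d p -> (forall i, whomog w (w' i) (tnth t i)) -> whomog w d (p \mPo t).
Proof.
move=> hp ht; rewrite comp_mpolyE; apply: whomog_sum => m /hp <-.
by apply/whomogZ/whomog_prod => i; exact: whomogX.
Qed.

Lemma whomog_scale d p (c : R) :
  whomog w d p -> p \mPo [tuple c ^+ w i *: 'X_i | i < n] = c ^+ d *: p.
Proof.
move=> hp; rewrite comp_mpolyE {3}[p]mpolyE scaler_sumr; apply: eq_big_seq => m /hp <-.
rewrite scalerA mulrC -scalerA mpolyXE_id /Defs.mweight; congr (_ *: _).
under eq_bigr do rewrite tnth_mktuple exprZn -exprM.
by rewrite scaler_prod -prodrXr.
Qed.

Lemma whomog_supp_var d p (j : 'I_n) :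
  (forall i, 0 < w i)%N -> (d <= w j)%N -> whomog w d p ->
  forall m, m \in msupp p -> m j != 0%N -> m = U_(j)%MM.
Proof.
move=> w_gt0 le_dw hp m /hp; rewrite /Defs.mweight (bigD1 j) //=.
set rest := (\sum_(i < n | i != j) _)%N => hd mj0.
have wjm : (w j <= w j * m j)%N by rewrite leq_pmulr // lt0n.
have mj1 : m j == 1%N by rewrite -(eqn_pmul2l (w_gt0 j)) muln1; lia.
have rest0 : rest == 0%N by lia.
apply/mnmP => i; rewrite mnm1E; have [<-|ji] := eqVneq j i; first exact/eqP.
move: rest0; rewrite sum_nat_eq0 => /forallP/(_ i); rewrite eq_sym ji /= muln_eq0.
by rewrite (gtn_eqF (w_gt0 i)) => /eqP.
Qed.

Lemma whomog_split_var d p (j : 'I_n) :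
  (forall i, 0 < w i)%N -> (d <= w j)%N -> whomog w d p ->
  p = p@_U_(j) *: 'X_j + (p \mPo zero_at j).
Proof. by move=> w_gt0 le_dw hp; apply/mpoly_split_var/(whomog_supp_var w_gt0 le_dw hp). Qed.

Lemma whomog_free_of d p (j : 'I_n) :
  (forall i, 0 < w i)%N -> (d < w j)%N -> whomog w d p -> free_of j p.
Proof.
move=> w_gt0 lt_dw hp; rewrite /free_of [RHS](whomog_split_var w_gt0 (ltnW lt_dw) hp).
suff -> : p@_U_(j) = 0 by rewrite scale0r add0r.
apply/memN_msupp_eq0/negP => /hp; rewrite mweightU => wj; lia.
Qed.

End WeightedHomogeneous.

Lemma mpolyX_neq0 (R : idomainType) (n : nat) (i : 'I_n) : ('X_i : {mpoly R[n]}) != 0.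
Proof.
apply/eqP => Xi0; have := mcoeffXU R i i.
by rewrite Xi0 mcoeff0 eqxx => /eqP; rewrite eq_sym oner_eq0.
Qed.

Lemma free_of_linear_product (R : idomainType) (n : nat) (j : 'I_n) (a0 a1 : R)
    (q0 q1 r : {mpoly R[n]}) :
  free_of j q0 -> free_of j q1 -> free_of j r ->
  free_of j ((a0 *: 'X_j + q0) * (a1 *: 'X_j + q1) - 'X_j * r) ->
  a0 * a1 = 0 /\ a0 *: q1 + a1 *: q0 = r.
Proof.
move=> free_q0 free_q1 free_r.
set B := a0 *: q1 + a1 *: q0 - r.
have -> : (a0 *: 'X_j + q0) * (a1 *: 'X_j + q1) - 'X_j * r
        = 'X_j * ((a0 * a1) *: 'X_j + B) + q0 * q1.
  by rewrite /B -!mul_mpolyC mpolyCM; ring.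
rewrite /free_of comp_mpolyD !rmorphM /= zero_atX mul0r add0r free_q0 free_q1.
move/eqP; rewrite eq_sym -subr_eq0 addrK mulf_eq0 (negbTE (mpolyX_neq0 _ _)) /= => /eqP XB0.
have B0 : B = 0.
  have := congr1 (comp_mpoly (zero_at j)) XB0.
  rewrite comp_mpolyD comp_mpolyZ zero_atX scaler0 add0r /B.
  by rewrite !(comp_mpolyB, comp_mpolyD, comp_mpolyZ) free_q0 free_q1 free_r comp_mpoly0.
move: XB0; rewrite B0 addr0 -mul_mpolyC => /eqP.
rewrite mulf_eq0 (negbTE (mpolyX_neq0 _ _)) orbF mpolyC_eq0.
by move/eqP=> a01; split; last exact: subr0_eq.
Qed.

Section GradedAut.
Variables (R : fieldType) (n : nat) (w : 'I_n -> nat).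

Lemma graded_aut_comp (phi1 phi2 : n.-tuple {mpoly R[n]}) :
  graded_aut w phi1 -> graded_aut w phi2 ->
  graded_aut w [tuple tnth phi1 i \mPo phi2 | i < n].
Proof.
case=> h1 [psi1 [psi1K phi1K]] [h2 [psi2 [psi2K phi2K]]]; split.
  by move=> i; rewrite tnth_mktuple; apply: whomog_comp (h1 i) h2.
exists [tuple tnth psi2 i \mPo psi1 | i < n]; split => i; rewrite tnth_mktuple comp_mpolyA.
  have -> : [tuple tnth psi1 j \mPo [tuple tnth phi1 k \mPo phi2 | k < n] | j < n] = phi2.
    by apply: eq_from_tnth => j; rewrite !tnth_mktuple -comp_mpolyA psi1K comp_mpolyX_tnth.
  exact: psi2K.
have -> : [tuple tnth phi2 j \mPo [tuple tnth psi2 k \mPo psi1 | k < n] | j < n] = psi1.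
  by apply: eq_from_tnth => j; rewrite !tnth_mktuple -comp_mpolyA phi2K comp_mpolyX_tnth.
exact: phi1K.
Qed.

Lemma graded_aut_scale (c : R) : c != 0 ->
  graded_aut w [tuple c ^+ w i *: 'X_i | i < n].
Proof.
move=> c0; split=> [i|]; first by rewrite tnth_mktuple; apply/whomogZ/whomogXU.
exists [tuple c^-1 ^+ w i *: 'X_i | i < n]; split => i;
  by rewrite !tnth_mktuple comp_mpolyZ comp_mpolyX_tnth tnth_mktuple scalerA -exprMn
    ?mulVf ?mulfV // expr1n scale1r.
Qed.

Lemma comp_inv_scaled_var (sigma psi : n.-tuple {mpoly R[n]}) (i j : 'I_n) (k : R) :
  (forall i, tnth sigma i \mPo psi = 'X_i) -> k != 0 ->
  tnth sigma i = k *: 'X_j -> tnth psi j = k^-1 *: 'X_i.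
Proof.
move=> sigmaK k0 si.
by rewrite -(sigmaK i) si comp_mpolyZ comp_mpolyX_tnth scalerA mulVf ?scale1r.
Qed.

End GradedAut.

Lemma w4_gt0 (c1 c2 c3 c4 : nat) :
  (0 < c1)%N -> (0 < c2)%N -> (0 < c3)%N -> (0 < c4)%N ->
  forall i, (0 < w4 c1 c2 c3 c4 i)%N.
Proof. by move=> ? ? ? ?; apply: ord4_inord; rewrite /w4 (tnth_inord 0). Qed.

Lemma w4_inord2 (c1 c2 c3 c4 : nat) : w4 c1 c2 c3 c4 (inord 2) = w2 c3 c4 (inord 0).
Proof. by rewrite /w4 /w2 !(tnth_inord 0). Qed.

Lemma w4_inord3 (c1 c2 c3 c4 : nat) : w4 c1 c2 c3 c4 (inord 3) = w2 c3 c4 (inord 1).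
Proof. by rewrite /w4 /w2 !(tnth_inord 0). Qed.

Section Hypersurface.
Variable C : fieldType.
Local Notation x k := ('X_(inord k : 'I_4) : {mpoly C[4]}).
Local Notation y k := ('X_(inord k : 'I_2) : {mpoly C[2]}).
Local Notation free0 := (free_of (inord 0 : 'I_4)).

(* x k is the coordinate s_(k+1).  sect p substitutes (s1, s2, s3, s4) := (p, 0, s3, s4);
   sect 0 restricts to the coordinate line s1 = s2 = 0, a copy of P(c3, c4). *)
Definition sect (p : {mpoly C[2]}) : 4.-tuple {mpoly C[2]} := [tuple p; 0; y 0; y 1].

Local Notation z := (sect 0).

Lemma x0_sect p : x 0 \mPo sect p = p.
Proof. by rewrite comp_mpolyX_tnth (tnth_inord 0). Qed.

Lemma x1_sect p : x 1 \mPo sect p = 0.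
Proof. by rewrite comp_mpolyX_tnth (tnth_inord 0). Qed.

Lemma x2_sect p : x 2 \mPo sect p = y 0.
Proof. by rewrite comp_mpolyX_tnth (tnth_inord 0). Qed.

Lemma x3_sect p : x 3 \mPo sect p = y 1.
Proof. by rewrite comp_mpolyX_tnth (tnth_inord 0). Qed.

Lemma emb34_comp (l : nat) (g : {mpoly C[2]}) (t : 4.-tuple {mpoly C[l]}) :
  emb34 g \mPo t = g \mPo [tuple tnth t (inord 2); tnth t (inord 3)].
Proof.
rewrite /emb34 comp_mpolyA; congr (g \mPo _); apply: eq_from_tnth.
by apply: ord2_inord; rewrite tnth_mktuple !(tnth_inord 0) //= comp_mpolyX_tnth !(tnth_inord 0).
Qed.

Lemma hypF_sect (g : {mpoly C[2]}) p : hypF g \mPo sect p = g.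
Proof.
rewrite /hypF comp_mpolyD rmorphM /= x1_sect mulr0 add0r emb34_comp.
rewrite -[RHS]comp_mpoly_id; congr (g \mPo _); apply: eq_from_tnth.
by apply: ord2_inord; rewrite tnth_mktuple !(tnth_inord 0).
Qed.

Lemma free0_emb34 (g : {mpoly C[2]}) : free0 (emb34 g).
Proof.
by apply: free_of_comp; apply: ord2_inord; rewrite (tnth_inord 0) //=;
  apply: free_ofX; rewrite -val_eqE /= !inordK.
Qed.

Lemma free0_sect q p : free0 q -> q \mPo sect p = q \mPo z.
Proof.
move=> hq; apply: (free_of_compE hq).
by apply: ord4_inord; rewrite ?eqxx // !(tnth_inord 0).
Qed.

Lemma sect_root (a : C) q : a != 0 -> free0 q ->
  (a *: x 0 + q) \mPo sect (- a^-1 *: (q \mPo z)) = 0.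
Proof.
move=> a0 hq; rewrite comp_mpolyD comp_mpolyZ x0_sect (free0_sect _ hq).
by rewrite scalerA mulrN mulfV // scaleN1r addNr.
Qed.

Definition restrict34 (phi : 4.-tuple {mpoly C[4]}) : 2.-tuple {mpoly C[2]} :=
  [tuple tnth phi (inord 2) \mPo z; tnth phi (inord 3) \mPo z].

Lemma restrict34_whomog (c1 c2 c3 c4 : nat) (phi : 4.-tuple {mpoly C[4]}) :
  (forall i, whomog (w4 c1 c2 c3 c4) (w4 c1 c2 c3 c4 i) (tnth phi i)) ->
  forall i, whomog (w2 c3 c4) (w2 c3 c4 i) (tnth (restrict34 phi) i).
Proof.
have z_hom j : whomog (w2 c3 c4) (w4 c1 c2 c3 c4 j) (tnth z j).
  elim/ord4_inord: j; rewrite (tnth_inord 0) //=; try exact: whomog0.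
    by rewrite w4_inord2; apply: whomogXU.
  by rewrite w4_inord3; apply: whomogXU.
move=> hom; apply: ord2_inord; rewrite (tnth_inord 0) //=.
  by rewrite -(w4_inord2 c1 c2); apply: whomog_comp (hom _) z_hom.
by rewrite -(w4_inord3 c1 c2); apply: whomog_comp (hom _) z_hom.
Qed.

Section Restriction.
Variables (sigma psi : 4.-tuple {mpoly C[4]}) (pi0 : {mpoly C[2]}).
Hypothesis psiK : forall i, tnth psi i \mPo sigma = 'X_i.
Hypothesis sigmaK : forall i, tnth sigma i \mPo psi = 'X_i.
Hypothesis free_sigma2 : free0 (tnth sigma (inord 2)).
Hypothesis free_sigma3 : free0 (tnth sigma (inord 3)).
Hypothesis sigma0_sect : tnth sigma (inord 0) \mPo sect pi0 = 0.
Hypothesis sigma1_sect : tnth sigma (inord 1) \mPo sect pi0 = 0.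

(* Substituting sect pi0 into sigma lands on the line s1 = s2 = 0, along
   restrict34 sigma; this is what lets psi invert restrict34 sigma. *)
Lemma restrict34_sect :
  [tuple tnth z i \mPo restrict34 sigma | i < 4] = [tuple tnth sigma i \mPo sect pi0 | i < 4].
Proof.
apply: eq_from_tnth; apply: ord4_inord; rewrite !tnth_mktuple (tnth_inord 0) //=.
- by rewrite comp_mpoly0 sigma0_sect.
- by rewrite comp_mpoly0 sigma1_sect.
- by rewrite comp_mpolyX_tnth (tnth_inord 0) //= (free0_sect _ free_sigma2).
by rewrite comp_mpolyX_tnth (tnth_inord 0) //= (free0_sect _ free_sigma3).
Qed.

Lemma restrict34_hypF (g1 g2 : {mpoly C[2]}) (lam : C) :
  hypF g2 \mPo sigma = lam *: hypF g1 -> g2 \mPo restrict34 sigma = lam *: g1.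
Proof.
move/(congr1 (comp_mpoly (sect pi0))).
by rewrite comp_mpolyA -restrict34_sect -comp_mpolyA comp_mpolyZ !hypF_sect.
Qed.

Lemma restrict34_invl i : tnth (restrict34 psi) i \mPo restrict34 sigma = 'X_i.
Proof.
by elim/ord2_inord: i; rewrite (tnth_inord 0) //= comp_mpolyA restrict34_sect
  -comp_mpolyA psiK comp_mpolyX_tnth (tnth_inord 0).
Qed.

Hypothesis psi1_sect : tnth psi (inord 1) \mPo z = 0.

Lemma restrict34_invr i : tnth (restrict34 sigma) i \mPo restrict34 psi = 'X_i.
Proof.
have agree j : j != inord 0 ->
    tnth [tuple tnth z k \mPo restrict34 psi | k < 4] j = tnth [tuple tnth psi k \mPo z | k < 4] j.
  elim/ord4_inord: j; rewrite ?eqxx // !tnth_mktuple (tnth_inord 0) //=.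
  - by rewrite comp_mpoly0 psi1_sect.
  - by rewrite comp_mpolyX_tnth (tnth_inord 0).
  by rewrite comp_mpolyX_tnth (tnth_inord 0).
elim/ord2_inord: i; rewrite (tnth_inord 0) //= comp_mpolyA.
  by rewrite (free_of_compE free_sigma2 agree) -comp_mpolyA sigmaK x2_sect.
by rewrite (free_of_compE free_sigma3 agree) -comp_mpolyA sigmaK x3_sect.
Qed.

Lemma restrict34_graded_aut (c1 c2 c3 c4 : nat) :
  (forall i, whomog (w4 c1 c2 c3 c4) (w4 c1 c2 c3 c4 i) (tnth sigma i)) ->
  graded_aut (w2 c3 c4) (restrict34 sigma).
Proof.
move=> hom; split; first exact: restrict34_whomog.
by exists (restrict34 psi); split; [exact: restrict34_invl | exact: restrict34_invr].
Qed.

End Restriction.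

Lemma linear_pair_sect (sigma psi : 4.-tuple {mpoly C[4]}) (a0 a1 lam : C)
    (q0 q1 : {mpoly C[4]}) :
  (forall i, tnth sigma i \mPo psi = 'X_i) -> lam != 0 -> free0 q0 -> free0 q1 ->
  tnth sigma (inord 0) = a0 *: x 0 + q0 -> tnth sigma (inord 1) = a1 *: x 0 + q1 ->
  a0 * a1 = 0 -> a0 *: q1 + a1 *: q0 = lam *: x 1 ->
  exists pi0, [/\ tnth sigma (inord 0) \mPo sect pi0 = 0,
                  tnth sigma (inord 1) \mPo sect pi0 = 0
                & tnth psi (inord 1) \mPo z = 0].
Proof.
move=> sigmaK lam0 free_q0 free_q1 s0E s1E a01 aq.
have lamx1_neq0 : lam *: x 1 != 0 by rewrite scaler_eq0 negb_or lam0 mpolyX_neq0.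
have [a1z|a1nz] := eqVneq a1 0.
- have a0nz : a0 != 0.
    by apply: contra_neq lamx1_neq0 => a0z; rewrite -aq a0z a1z !scale0r addr0.
  have s1x : tnth sigma (inord 1) = (a0^-1 * lam) *: x 1.
    by rewrite s1E -scalerA -aq a1z !scale0r add0r addr0 scalerA mulVf ?scale1r.
  exists (- a0^-1 *: (q0 \mPo z)); split.
  + by rewrite s0E sect_root.
  + by rewrite s1x comp_mpolyZ x1_sect scaler0.
  rewrite (comp_inv_scaled_var sigmaK _ s1x) ?comp_mpolyZ ?x1_sect ?scaler0 //.
  by rewrite mulf_neq0 ?invr_eq0.
have a0z : a0 = 0 by move/eqP: a01; rewrite mulf_eq0 (negbTE a1nz) orbF => /eqP.
have s0x : tnth sigma (inord 0) = (a1^-1 * lam) *: x 1.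
  by rewrite s0E -scalerA -aq a0z !scale0r !add0r scalerA mulVf ?scale1r.
exists (- a1^-1 *: (q1 \mPo z)); split.
- by rewrite s0x comp_mpolyZ x1_sect scaler0.
- by rewrite s1E sect_root.
rewrite (comp_inv_scaled_var sigmaK _ s0x) ?comp_mpolyZ ?x0_sect ?scaler0 //.
by rewrite mulf_neq0 ?invr_eq0.
Qed.

Lemma hypF_aut_restrict (c1 c2 c3 c4 : nat) (g1 g2 : {mpoly C[2]})
    (sigma : 4.-tuple {mpoly C[4]}) (lam : C) :
  (0 < c1)%N -> (0 < c2)%N -> (0 < c3)%N -> (0 < c4)%N ->
  (c2 <= c1)%N -> (c3 < c1)%N -> (c4 < c1)%N ->
  graded_aut (w4 c1 c2 c3 c4) sigma -> lam != 0 ->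
  hypF g2 \mPo sigma = lam *: hypF g1 ->
  graded_aut (w2 c3 c4) (restrict34 sigma) /\ g2 \mPo restrict34 sigma = lam *: g1.
Proof.
move=> hc1 hc2 hc3 hc4 h12 h13 h14 [hom [psi [psiK sigmaK]]] lam0 hH.
have w_gt0 := w4_gt0 hc1 hc2 hc3 hc4.
have wE k : (k < 4)%N -> w4 c1 c2 c3 c4 (inord k) = nth 0%N [:: c1; c2; c3; c4] k.
  by move=> hk; rewrite /w4 (tnth_inord 0).
have free2 : free0 (tnth sigma (inord 2)).
  by apply: (whomog_free_of w_gt0 _ (hom _)); rewrite !wE.
have free3 : free0 (tnth sigma (inord 3)).
  by apply: (whomog_free_of w_gt0 _ (hom _)); rewrite !wE.
have s0E := whomog_split_var w_gt0 (leqnn _) (hom (inord 0)).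
have le10 : (w4 c1 c2 c3 c4 (inord 1) <= w4 c1 c2 c3 c4 (inord 0))%N by rewrite !wE.
have s1E := whomog_split_var w_gt0 le10 (hom (inord 1)).
have G_free : free0 (emb34 g2 \mPo sigma).
  by rewrite emb34_comp; apply: free_of_comp; apply: ord2_inord; rewrite (tnth_inord 0).
set s0 := tnth sigma (inord 0) in s0E *; set s1 := tnth sigma (inord 1) in s1E *.
have eq_free : s0 * s1 - x 0 * (lam *: x 1) = lam *: emb34 g1 - (emb34 g2 \mPo sigma).
  rewrite -scalerAr -[s0 * s1](addrK (emb34 g2 \mPo sigma)).
  move: hH; rewrite /hypF comp_mpolyD rmorphM /= !comp_mpolyX_tnth scalerDr => ->.
  ring.
have lamx1_free : free0 (lam *: x 1).
  by apply/free_ofZ/free_ofX; rewrite -val_eqE /= !inordK.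
have : free0 (s0 * s1 - x 0 * (lam *: x 1)).
  by rewrite eq_free /free_of comp_mpolyB comp_mpolyZ free0_emb34 G_free.
rewrite {1}s0E {1}s1E.
case/(free_of_linear_product (free_of_zero_at _ _) (free_of_zero_at _ _) lamx1_free) => a01 aq.
have [pi0 [sigma0_sect sigma1_sect psi1_sect]] :=
  linear_pair_sect sigmaK lam0 (free_of_zero_at _ _) (free_of_zero_at _ _) s0E s1E a01 aq.
split.
  exact: (restrict34_graded_aut psiK sigmaK free2 free3 sigma0_sect sigma1_sect psi1_sect).
exact: (restrict34_hypF free2 free3 sigma0_sect sigma1_sect).
Qed.
End Hypersurface.

Unset Implicit Arguments.
Import Num.Theory.

Theorem lemma3p1 (R : realType) (c1 c2 c3 c4 : nat)
  (hc1 : (0 < c1)%N) (hc2 : (0 < c2)%N) (hc3 : (0 < c3)%N) (hc4 : (0 < c4)%N)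
  (h12 : (c2 <= c1)%N) (h13 : (c3 < c1)%N) (h14 : (c4 < c1)%N)
  (g1 g2 : {mpoly R[i][2]})
  (hg1 : whomog (w2 c3 c4) (c1 + c2) g1) (hg2 : whomog (w2 c3 c4) (c1 + c2) g2)
  (sigma : 4.-tuple {mpoly R[i][4]})
  (hsigma : graded_aut (w4 c1 c2 c3 c4) sigma)
  (hH : exists lam : R[i], lam != 0 /\ hypF g2 \mPo sigma = lam *: hypF g1) :
  exists tau : 2.-tuple {mpoly R[i][2]},
    graded_aut (w2 c3 c4) tau /\ g1 = g2 \mPo tau.
Proof.
have [lam [lam0 hHlam]] := hH.
have [tau_aut g2_tau] := hypF_aut_restrict hc1 hc2 hc3 hc4 h12 h13 h14 hsigma lam0 hHlam.
pose t := (c1 + c2).-root lam^-1.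
have tE : t ^+ (c1 + c2) = lam^-1 by rewrite rootCK // addn_gt0 hc1.
have t0 : t != 0.
  apply/eqP => t0; move: tE; rewrite t0 expr0n addn_eq0 (gtn_eqF hc1) /= => /esym/eqP.
  by rewrite invr_eq0 (negbTE lam0).
pose D := [tuple t ^+ w2 c3 c4 j *: 'X_j | j < 2].
exists [tuple tnth D j \mPo restrict34 sigma | j < 2]; split.
  exact: graded_aut_comp (graded_aut_scale _ t0) tau_aut.
by rewrite -comp_mpolyA (whomog_scale _ hg2) comp_mpolyZ g2_tau scalerA tE mulVf ?scale1r.
Qed.
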